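(* Let $v_1\ge v_2>0$, $m\in\mathbb{Z}_{\ge1}$, $\alpha\in(0,1)$ and $0<b\le m$; put $\delta=\frac{2m+1}{m+1}$ and $\sigma=\frac{2m+1}{m}$. Let $(X,Y)$ be a strategy profile with $\mathbf{E}(X)=m+\alpha$ and $\mathbf{E}(Y)=b$ such that: $\frac{m(m+1)}{b}=\frac{v_1}{2}$; $(X,Y)$ is a Nash equilibrium of the General Lotto game $\Gamma(m+\alpha,b)$; $Y=\left(1-\frac bm\right)\delta_0+\frac bmU_{\mathrm{E}}^m$; and (a) if $0<\alpha\le\frac{m+1}{2m+1}$, $X=\lambda_{\mathrm{O}}\big((1-\alpha)U_{\mathrm{O}}^m+\alpha U_{\mathrm{O}}^{m+1}\big)+\lambda_{\mathrm{E}}\big((1-\alpha)U_{\mathrm{E}}^m+\alpha U_{\mathrm{O}}^{m+1}\big)+\sum_{j=1}^m\lambda_j\big(\alpha\delta V_j^m+(1-\alpha\delta)U_{\mathrm{O}}^m\big)+\sum_{j=1}^m\kappa_j\big(\alpha\delta V_j^m+(1-\alpha\delta)U_{\mathrm{E}}^m\big)$; (b) if $\frac{m+1}{2m+1}<\alpha<1$, $X=\lambda_{\mathrm{O}}\big((1-\alpha)U_{\mathrm{O}}^m+\alpha U_{\mathrm{O}}^{m+1}\big)+\lambda_{\mathrm{E}}\big((1-\alpha)U_{\mathrm{E}}^m+\alpha U_{\mathrm{O}}^{m+1}\big)+\sum_{j=1}^m\lambda_j\big((1-\alpha)\sigma V_j^m+(1-(1-\alpha)\sigma)U_{\mathrm{O}}^{m+1}\big)$,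 with $\kappa_1=\dots=\kappa_m:=0$; where all coefficients $\lambda_{\mathrm{O}},\lambda_{\mathrm{E}},\lambda_j,\kappa_j$ are nonnegative and sum to $1$, $\lambda_{\mathrm{E}}=0$ and $\sum_{j=1}^m\kappa_j=0$ if $m>b$, and $\frac{m+1-\alpha}{m(m+1)}-\frac{2}{v_2}=\lambda_{\mathrm{E}}\frac{1-\alpha}{m(m+1)}+\sum_{j=1}^m\kappa_j\frac{1}{m+1}\left(\frac{1-\alpha}{m}-\frac{\alpha}{m+1}\right)$. Then $(X,Y)$ is a Nash equilibrium of the discrete all-pay auction with valuations $v_1,v_2$.
   Context: Discrete all-pay auction: two players, 1 and 2, value a prize at $v_1$ and $v_2$ respectively, where $v_1\ge v_2>0$. A (mixed) strategy is a probability distribution on $\mathbb{Z}_{\ge 0}$ with finite mean, identified with a $\mathbb{Z}_{\ge0}$-valued random variable; the two players' choices are independent. If player 1 uses $X$ and player 2 uses $Y$, the expected payoffs are $P^1(X,Y)=v_1\Pr(X>Y)+\frac{v_1}{2}\Pr(X=Y)-\mathbf{E}(X)$ and $P^2(Y,X)=v_2\Pr(Y>X)+\frac{v_2}{2}\Pr(X=Y)-\mathbf{E}(Y)$. A Nash equilibrium of the all-pay auction is a pair $(X,Y)$ with $P^1(X,Y)\ge P^1(X',Y)$ and $P^2(Y,X)\ge P^2(Y',X)$ for all strategies $X',Y'$. $\delta_j$ denotes the point mass at $j$; $\lambda A+(1-\lambda)B$ denotes the mixture of distributions $A$ and $B$ (similarly for longer convex combinations). Discrete General Lotto game: for reals $a,b\ge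 0$, in $\Gamma(a,b)$ player 1 chooses a distribution $X$ on $\mathbb{Z}_{\ge0}$ with $\mathbf{E}(X)=a$ and player 2 chooses a distribution $Y$ on $\mathbb{Z}_{\ge 0}$ with $\mathbf{E}(Y)=b$ (independently); the payoff to player 1 is $H(X,Y)=\Pr(X>Y)-\Pr(X<Y)$ and to player 2 is $H(Y,X)=-H(X,Y)$. A Nash equilibrium of $\Gamma(a,b)$ is a pair $(X,Y)$ from these strategy sets such that neither player can increase her payoff by switching to another strategy in her own strategy set. Special distributions: for $m\ge1$, $U_{\mathrm{O}}^m$ is the uniform distribution on $\{1,3,\dots,2m-1\}$; for $m\ge0$, $U_{\mathrm{E}}^m$ is the uniform distribution on $\{0,2,\dots,2m\}$; for $m\ge1$ and $1\le j\le m$, $V_j^m=\sum_{i=1}^{j-1}\frac{2}{2m+1}\delta_{2i-1}+\frac{1}{2m+1}\delta_{2j-1}+\sum_{i=j}^{m}\frac{2}{2m+1}\delta_{2i}$. *)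

From Stdlib Require Import Reals Lra Arith Bool.
From Coquelicot Require Import Coquelicot.
Open Scope R_scope.

Definition strategy (p : nat -> R) : Prop :=
  (forall n, 0 <= p n) /\ is_series p 1 /\ ex_series (fun n => INR n * p n).

Definition mean (p : nat -> R) : R := Series (fun n => INR n * p n).

Fixpoint lt_mass (q : nat -> R) (i : nat) : R :=
  match i with O => 0 | S k => lt_mass q k + q k end.

Definition PrGt (p q : nat -> R) : R := Series (fun i => p i * lt_mass q i).
Definition PrEq (p q : nat -> R) : R := Series (fun i => p i * q i).

Definition P1 (v1 : R) (p q : nat -> R) : R :=
  v1 * PrGt p q + v1 / 2 * PrEq p q - mean p.
Definition P2 (v2 : R) (q p : nat -> R) : R :=
  v2 * PrGt q p + v2 / 2 * PrEq p q - mean q.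

Definition allpay_Nash (v1 v2 : R) (p q : nat -> R) : Prop :=
  strategy p /\ strategy q /\
  (forall p', strategy p' -> P1 v1 p' q <= P1 v1 p q) /\
  (forall q', strategy q' -> P2 v2 q' p <= P2 v2 q p).

Definition H (p q : nat -> R) : R := PrGt p q - PrGt q p.

Definition lotto_Nash (a b : R) (p q : nat -> R) : Prop :=
  strategy p /\ mean p = a /\ strategy q /\ mean q = b /\
  (forall p', strategy p' -> mean p' = a -> H p' q <= H p q) /\
  (forall q', strategy q' -> mean q' = b -> H q' p <= H q p).

Definition dirac (j : nat) : nat -> R := fun n => if Nat.eqb n j then 1 else 0.

Definition UO (m : nat) : nat -> R :=
  fun n => if andb (Nat.odd n) (Nat.ltb n (2 * m)) then / INR m else 0.

Definition UE (m : nat) : nat -> R :=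
  fun n => if andb (Nat.even n) (Nat.leb n (2 * m)) then / INR (m + 1) else 0.

(* V_j^m = sum_{i=1}^{j-1} 2/(2m+1) delta_{2i-1} + 1/(2m+1) delta_{2j-1}
           + sum_{i=j}^{m} 2/(2m+1) delta_{2i} *)
Definition V (j m : nat) : nat -> R :=
  fun n =>
    if Nat.odd n then
      (let i := Nat.div2 (n + 1) in
       if Nat.ltb i j then 2 / INR (2 * m + 1)
       else if Nat.eqb i j then 1 / INR (2 * m + 1) else 0)
    else
      (let i := Nat.div2 n in
       if andb (Nat.leb j i) (Nat.leb i m) then 2 / INR (2 * m + 1) else 0).

Fixpoint sumR (n : nat) (f : nat -> R) : R :=
  match n with O => 0 | S k => sumR k f + f (S k) end.

From Stdlib Require Import Reals.
From Coquelicot Require Import Coquelicot.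
From Stdlib Require Import Lra Arith Bool Lia.
Open Scope R_scope.

(* Write G_q(n) = Pr(q < n) + Pr(q = n)/2 ([midcdf]); bidding n
   against q yields v G_q(n) - n ([bid_gain]), and the all-pay payoff of a
   strategy is the expectation of this gain ([payoff_expectation]).  Hence a
   strategy is a best response as soon as the gain is maximal on its support
   ([best_response]), and the theorem reduces to two indifference facts.

   Player 2: every building block U_O^m, U_O^(m+1), U_E^m, V_j^m of X has a
   G-function growing at a constant rate on the even bids 0..2m and never
   faster ([midcdf_slope], [UO_slope], [UE_slope], [V_slope]); this property
   is stable under nonnegative combinations, and the indifference relation
   between the coefficients makes the rate of X exactly 2/v2
   ([mixture_slope]).  So against X no bid beats 0, and the support
   {0, 2, ..., 2m} of Y consists of optimal bids ([slope_gain], [Y_support]).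

   Player 1: since v1 b/m = 2(m+1), against Y every bid n in 1..2m+1 gains
   the same maximal amount, bid 0 only when b = m ([Y_gain]); and X lives on
   {0, ..., 2m+1}, charging 0 only when b = m ([mixture_support]). *)

Lemma lt_mass_sum_n (p : nat -> R) (n : nat) : lt_mass p (S n) = sum_n p n.
Proof.
  induction n as [|n IH].
  - simpl. rewrite sum_O. ring.
  - change (lt_mass p (S (S n))) with (lt_mass p (S n) + p (S n)).
    rewrite IH, sum_Sn. reflexivity.
Qed.

Lemma strategy_mass_bounds (p : nat -> R) :
  strategy p -> forall n, 0 <= lt_mass p n <= 1 /\ 0 <= p n <= 1.
Proof.
  intros [hp [hs _]].
  assert (hle : forall n, lt_mass p n <= 1).
  { intros [|n]; [simpl; lra|]. rewrite lt_mass_sum_n.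
    apply (is_lim_seq_incr_compare (sum_n p)); [exact hs|].
    intros k. rewrite sum_Sn. unfold plus; simpl. specialize (hp (S k)). lra. }
  assert (hge : forall n, 0 <= lt_mass p n).
  { induction n as [|n IH]; simpl; [lra|]. specialize (hp n). lra. }
  intros n. specialize (hle (S n)). specialize (hge n). simpl in hle.
  specialize (hp n). repeat split; lra.
Qed.

Lemma ex_series_bounded_weight (p g : nat -> R) :
  strategy p -> (forall n, 0 <= g n <= 1) -> ex_series (fun n => p n * g n).
Proof.
  intros [hp [hs _]] hg.
  apply (@ex_series_le R_AbsRing R_CompleteNormedModule _ p); [|exists 1; exact hs].
  intros n. change (Rabs (p n * g n) <= p n).
  specialize (hp n); specialize (hg n). rewrite Rabs_pos_eq; nra.
Qed.

(* The mid-distribution function Pr(Y < n) + Pr(Y = n)/2: the probability of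
   winning with bid n against Y when ties are split evenly. *)
Definition midcdf (q : nat -> R) (n : nat) : R := lt_mass q n + q n / 2.

Definition bid_gain (v : R) (q : nat -> R) (n : nat) : R := v * midcdf q n - INR n.

Lemma payoff_expectation (v : R) (p q : nat -> R) :
  strategy p -> strategy q ->
  ex_series (fun n => p n * bid_gain v q n) /\
  v * PrGt p q + v / 2 * PrEq p q - mean p = Series (fun n => p n * bid_gain v q n).
Proof.
  intros hps hqs.
  assert (hqb := strategy_mass_bounds q hqs).
  assert (hlt := ex_series_bounded_weight p (lt_mass q) hps (fun n => proj1 (hqb n))).
  assert (heq := ex_series_bounded_weight p q hps (fun n => proj2 (hqb n))).
  destruct hps as [_ [_ hmean]].
  assert (hwin : ex_series (fun n => v * (p n * lt_mass q n)))
    by exact (ex_series_scal_l v _ hlt).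
  assert (htie : ex_series (fun n => v / 2 * (p n * q n)))
    by exact (ex_series_scal_l (v / 2) _ heq).
  assert (hreward : ex_series (fun n => v * (p n * lt_mass q n) + v / 2 * (p n * q n)))
    by exact (ex_series_plus _ _ hwin htie).
  assert (hgain : forall n, p n * bid_gain v q n =
                   v * (p n * lt_mass q n) + v / 2 * (p n * q n) - INR n * p n).
  { intros n. unfold bid_gain, midcdf. field. }
  split.
  - exact (ex_series_ext _ _ (fun n => eq_sym (hgain n)) (ex_series_minus _ _ hreward hmean)).
  - rewrite (Series_ext _ _ hgain). unfold PrGt, PrEq, mean.
    rewrite Series_minus, Series_plus, !Series_scal_l by assumption.
    reflexivity.
Qed.

Lemma expectation_le_const (p F : nat -> R) (M : R) :
  strategy p -> ex_series (fun n => p n * F n) -> (forall n, F n <= M) ->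
  Series (fun n => p n * F n) <= M.
Proof.
  intros [hp [hs _]] hex hF.
  assert (hexM : ex_series (fun n => M * p n)) by exact (ex_series_scal_l M p (ex_intro _ 1 hs)).
  assert (hgap : 0 <= Series (fun n => M * p n - p n * F n)).
  { replace 0 with (Series (fun n : nat => 0 * p n)) by (rewrite Series_scal_l; ring).
    apply Series_le; [|exact (ex_series_minus _ _ hexM hex)].
    intros n. specialize (hp n); specialize (hF n). split; [lra|nra]. }
  rewrite Series_minus, Series_scal_l, (is_series_unique _ _ hs) in hgap by assumption. lra.
Qed.

Lemma expectation_eq_const (p F : nat -> R) (M : R) :
  strategy p -> (forall n, p n <> 0 -> F n = M) -> Series (fun n => p n * F n) = M.
Proof.
  intros [_ [hs _]] hF.
  rewrite (Series_ext _ (fun n => M * p n)).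
  - rewrite Series_scal_l, (is_series_unique _ _ hs). ring.
  - intros n. destruct (Req_dec (p n) 0) as [h|h]; [rewrite h; ring|]. rewrite hF; auto; ring.
Qed.

Lemma best_response (v : R) (p q : nat -> R) (M : R) :
  strategy p -> strategy q ->
  (forall n, bid_gain v q n <= M) -> (forall n, p n <> 0 -> bid_gain v q n = M) ->
  forall p', strategy p' ->
  v * PrGt p' q + v / 2 * PrEq p' q - mean p' <= v * PrGt p q + v / 2 * PrEq p q - mean p.
Proof.
  intros hps hqs hle heq p' hps'.
  destruct (payoff_expectation v p' q hps' hqs) as [hex ->].
  destruct (payoff_expectation v p q hps hqs) as [_ ->].
  rewrite (expectation_eq_const p _ M hps heq).
  apply expectation_le_const; assumption.
Qed.

(* The tie probability is symmetric; needed to read player 2's payoff. *)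
Lemma PrEq_comm (p q : nat -> R) : PrEq p q = PrEq q p.
Proof. unfold PrEq. apply Series_ext. intros n. ring. Qed.

Lemma midcdf_succ (f : nat -> R) (n : nat) :
  midcdf f (S n) = midcdf f n + (f n + f (S n)) / 2.
Proof. unfold midcdf. simpl. field. Qed.

Lemma midcdf_ext (f g : nat -> R) (n : nat) :
  (forall k, f k = g k) -> midcdf f n = midcdf g n.
Proof.
  intros hfg. unfold midcdf. rewrite hfg. f_equal.
  induction n as [|n IH]; simpl; [reflexivity|]. rewrite IH, hfg. reflexivity.
Qed.

Lemma midcdf_lin (f g : nat -> R) (a c : R) (n : nat) :
  midcdf (fun k => a * f k + c * g k) n = a * midcdf f n + c * midcdf g n.
Proof.
  unfold midcdf.
  assert (hlt : lt_mass (fun k => a * f k + c * g k) n = a * lt_mass f n + c * lt_mass g n).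
  { induction n as [|n IH]; simpl; [ring|]. rewrite IH. ring. }
  rewrite hlt. field.
Qed.

(* With s = 2/v this says
   that every bid gains at most as much as bid 0, all even bids up to 2m
   included (see [slope_gain]). *)
Definition midcdf_slope (m : nat) (f : nat -> R) (s : R) : Prop :=
  (forall n, midcdf f n - midcdf f 0 <= s * INR n / 2) /\
  (forall k, (k <= m)%nat -> midcdf f (2 * k) - midcdf f 0 = s * INR k).

Lemma slope_ext (m : nat) (f g : nat -> R) (s t : R) :
  midcdf_slope m f s -> (forall n, f n = g n) -> s = t -> midcdf_slope m g t.
Proof.
  intros [hle heq] hfg <-. split; intros;
    rewrite <- !(midcdf_ext f g) by exact hfg; auto.
Qed.

Lemma slope_lin (m : nat) (f g : nat -> R) (s t a c : R) :
  midcdf_slope m f s -> midcdf_slope m g t -> 0 <= a -> 0 <= c ->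
  midcdf_slope m (fun n => a * f n + c * g n) (a * s + c * t).
Proof.
  intros [f_le f_eq] [g_le g_eq] ha hc. split.
  - intros n. rewrite !midcdf_lin. specialize (f_le n); specialize (g_le n).
    apply (Rmult_le_compat_l a) in f_le; apply (Rmult_le_compat_l c) in g_le; auto. lra.
  - intros k hk. rewrite !midcdf_lin. specialize (f_eq k hk); specialize (g_eq k hk).
    transitivity (a * (midcdf f (2 * k) - midcdf f 0) + c * (midcdf g (2 * k) - midcdf g 0));
      [ring|]. rewrite f_eq, g_eq. ring.
Qed.

Lemma slope_add (m : nat) (f g : nat -> R) (s t : R) :
  midcdf_slope m f s -> midcdf_slope m g t -> midcdf_slope m (fun n => f n + g n) (s + t).
Proof.
  intros hf hg. refine (slope_ext _ _ _ _ _ (slope_lin m f g s t 1 1 hf hg _ _) _ _);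
    intros; lra.
Qed.

Lemma slope_zero (m : nat) : midcdf_slope m (fun _ => 0) 0.
Proof.
  assert (hz : forall n, midcdf (fun _ => 0) n = 0).
  { intros n. unfold midcdf. induction n as [|n IH]; simpl in *; lra. }
  split; intros; rewrite !hz; lra.
Qed.

Lemma slope_sum (m N : nat) (w s : nat -> R) (F : nat -> nat -> R) :
  (forall j, (1 <= j <= N)%nat -> midcdf_slope m (F j) (s j) /\ 0 <= w j) ->
  midcdf_slope m (fun n => sumR N (fun j => w j * F j n)) (sumR N (fun j => w j * s j)).
Proof.
  induction N as [|N IH]; intros hF; simpl; [apply slope_zero|].
  destruct (hF (S N)) as [hlast hw]; [lia|].
  assert (hinit : midcdf_slope m (fun n => sumR N (fun j => w j * F j n))
                                 (sumR N (fun j => w j * s j)))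
    by (apply IH; intros j hj; apply hF; lia).
  refine (slope_ext _ _ _ _ _ (slope_lin _ _ _ _ _ 1 (w (S N)) hinit hlast _ hw) _ _);
    intros; lra.
Qed.

Lemma slope_of_increments (m : nat) (f : nat -> R) (s : R) :
  (forall k, f (2 * k)%nat + f (2 * k + 1)%nat <= s) ->
  (forall k, f (2 * k)%nat + 2 * f (2 * k + 1)%nat + f (2 * S k)%nat <= 2 * s) ->
  (forall k, (k < m)%nat -> f (2 * k)%nat + 2 * f (2 * k + 1)%nat + f (2 * S k)%nat = 2 * s) ->
  midcdf_slope m f s.
Proof.
  intros h_odd h_pair h_exact.
  assert (h_even_step : forall k, midcdf f (2 * S k) =
     midcdf f (2 * k) + (f (2 * k)%nat + 2 * f (2 * k + 1)%nat + f (2 * S k)%nat) / 2).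
  { intros k. replace (2 * S k)%nat with (S (S (2 * k))) by lia.
    rewrite !midcdf_succ. replace (S (2 * k)) with (2 * k + 1)%nat by lia. field. }
  assert (h_even_le : forall k, midcdf f (2 * k) - midcdf f 0 <= s * INR k).
  { induction k as [|k IH]; [simpl; lra|]. rewrite h_even_step, S_INR.
    specialize (h_pair k). lra. }
  split.
  - intros n. destruct (Nat.Even_or_Odd n) as [[k ->]|[k ->]].
    + rewrite mult_INR. specialize (h_even_le k). simpl (INR 2). lra.
    + replace (2 * k + 1)%nat with (S (2 * k)) by lia.
      rewrite midcdf_succ, S_INR, mult_INR. replace (S (2 * k)) with (2 * k + 1)%nat by lia.
      specialize (h_even_le k); specialize (h_odd k). simpl (INR 2). lra.
  - induction k as [|k IH]; intros hk; [simpl; lra|].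
    rewrite h_even_step, S_INR, h_exact by lia. specialize (IH ltac:(lia)). lra.
Qed.

Lemma INR_succ_m (m : nat) : INR (m + 1) = INR m + 1.
Proof. rewrite plus_INR. reflexivity. Qed.

Lemma INR_2m_succ (m : nat) : INR (2 * m + 1) = 2 * INR m + 1.
Proof. rewrite plus_INR, mult_INR. reflexivity. Qed.

Lemma odd_double (k : nat) : Nat.odd (2 * k) = false.
Proof. rewrite Nat.odd_mul. reflexivity. Qed.

Lemma odd_double_succ (k : nat) : Nat.odd (2 * k + 1) = true.
Proof. rewrite Nat.add_comm, Nat.odd_add_mul_2. reflexivity. Qed.

Lemma even_double (k : nat) : Nat.even (2 * k) = true.
Proof. rewrite Nat.even_mul. reflexivity. Qed.

Lemma even_double_succ (k : nat) : Nat.even (2 * k + 1) = false.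
Proof. rewrite Nat.add_comm, Nat.even_add_mul_2. reflexivity. Qed.

Ltac case_nat_tests :=
  repeat match goal with
  | |- context [Nat.leb ?a ?b] => destruct (Nat.leb_spec a b)
  | |- context [Nat.ltb ?a ?b] => destruct (Nat.ltb_spec a b)
  | |- context [Nat.eqb ?a ?b] => destruct (Nat.eqb_spec a b)
  end; cbn [andb].

Lemma UO_even (M k : nat) : UO M (2 * k) = 0.
Proof. unfold UO. rewrite odd_double. reflexivity. Qed.

Lemma UO_odd (M k : nat) : UO M (2 * k + 1) = if Nat.ltb k M then / INR M else 0.
Proof. unfold UO. rewrite odd_double_succ. simpl. case_nat_tests; auto; lia. Qed.

Lemma UE_even (M k : nat) : UE M (2 * k) = if Nat.leb k M then / INR (M + 1) else 0.
Proof. unfold UE. rewrite even_double. simpl. case_nat_tests; auto; lia. Qed.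

Lemma UE_odd (M k : nat) : UE M (2 * k + 1) = 0.
Proof. unfold UE. rewrite even_double_succ. reflexivity. Qed.

Lemma V_even (j m k : nat) :
  V j m (2 * k) = if andb (Nat.leb j k) (Nat.leb k m) then 2 / INR (2 * m + 1) else 0.
Proof. unfold V. rewrite odd_double, Nat.div2_double. reflexivity. Qed.

Lemma V_odd (j m k : nat) :
  V j m (2 * k + 1) = if Nat.ltb (k + 1) j then 2 / INR (2 * m + 1)
                      else if Nat.eqb (k + 1) j then 1 / INR (2 * m + 1) else 0.
Proof.
  unfold V. rewrite odd_double_succ.
  replace (2 * k + 1 + 1)%nat with (2 * (k + 1))%nat by lia.
  rewrite Nat.div2_double. reflexivity.
Qed.

Lemma UO_slope (m M : nat) : (1 <= M)%nat -> (m <= M)%nat -> midcdf_slope m (UO M) (/ INR M).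
Proof.
  intros hM hmM. assert (0 < / INR M) by (apply Rinv_0_lt_compat, lt_0_INR; lia).
  apply slope_of_increments; intros k; [| |intros hk];
    rewrite !UO_even, UO_odd; case_nat_tests; lia || lra.
Qed.

Lemma UE_slope (m : nat) : midcdf_slope m (UE m) (/ INR (m + 1)).
Proof.
  assert (0 < / INR (m + 1)) by (apply Rinv_0_lt_compat, lt_0_INR; lia).
  apply slope_of_increments; intros k; [| |intros hk];
    rewrite !UE_even, UE_odd; case_nat_tests; lia || lra.
Qed.

Lemma V_slope (m j : nat) : (1 <= j <= m)%nat -> midcdf_slope m (V j m) (2 / INR (2 * m + 1)).
Proof.
  intros hj. assert (0 < / INR (2 * m + 1)) by (apply Rinv_0_lt_compat, lt_0_INR; lia).
  unfold Rdiv.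
  apply slope_of_increments; intros k; [| |intros hk];
    rewrite !V_even, V_odd; case_nat_tests; unfold Rdiv; lia || lra.
Qed.

Lemma V_mix_slope (m j : nat) (d t : R) (g : nat -> R) :
  (1 <= j <= m)%nat -> 0 <= d <= 1 -> midcdf_slope m g t ->
  midcdf_slope m (fun n => d * V j m n + (1 - d) * g n) (d * (2 / INR (2 * m + 1)) + (1 - d) * t).
Proof. intros hj hd hg. apply slope_lin; [apply V_slope; exact hj | exact hg | lra | lra]. Qed.

Lemma UO_beyond (M n : nat) : (2 * M <= n)%nat -> UO M n = 0.
Proof. intros hn. unfold UO. case_nat_tests; [lia|]. rewrite andb_false_r. reflexivity. Qed.

Lemma UE_beyond (M n : nat) : (2 * M < n)%nat -> UE M n = 0.
Proof. intros hn. unfold UE. case_nat_tests; [lia|]. rewrite andb_false_r. reflexivity. Qed.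

Lemma V_beyond (j m n : nat) : (j <= m)%nat -> (2 * m + 2 <= n)%nat -> V j m n = 0.
Proof.
  intros hj hn. destruct (Nat.Even_or_Odd n) as [[k ->]|[k ->]];
    [rewrite V_even|rewrite V_odd]; case_nat_tests; lia || reflexivity.
Qed.

Lemma V_at_zero (j m : nat) : (1 <= j)%nat -> V j m 0 = 0.
Proof.
  intros hj. change (V j m 0) with (V j m (2 * 0)). rewrite V_even.
  case_nat_tests; lia || reflexivity.
Qed.

Lemma sumR_ext (n : nat) (f g : nat -> R) :
  (forall j, (1 <= j <= n)%nat -> f j = g j) -> sumR n f = sumR n g.
Proof.
  induction n as [|n IH]; intros hfg; simpl; [reflexivity|].
  rewrite IH by (intros; apply hfg; lia). rewrite hfg by lia. reflexivity.
Qed.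

Lemma sumR_scal (n : nat) (w : nat -> R) (K : R) : sumR n (fun j => w j * K) = sumR n w * K.
Proof. induction n as [|n IH]; simpl; [ring|]. rewrite IH. ring. Qed.

Lemma weight_of_bound (x c : R) : 0 < c -> 0 <= x <= / c -> 0 <= x * c <= 1.
Proof.
  intros hc [hx0 hx1]. split; [apply Rmult_le_pos; lra|].
  apply (Rmult_le_compat_r c) in hx1; [|lra]. rewrite Rinv_l in hx1; lra.
Qed.

Definition delta_coef (m : nat) : R := (2 * INR m + 1) / (INR m + 1).
Definition sigma_coef (m : nat) : R := (2 * INR m + 1) / INR m.

Definition low_mixture (m : nat) (alpha lamO lamE : R) (lam kap : nat -> R) (n : nat) : R :=
  lamO * ((1 - alpha) * UO m n + alpha * UO (m + 1) n)
  + lamE * ((1 - alpha) * UE m n + alpha * UO (m + 1) n)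
  + sumR m (fun j => lam j *
      (alpha * delta_coef m * V j m n + (1 - alpha * delta_coef m) * UO m n))
  + sumR m (fun j => kap j *
      (alpha * delta_coef m * V j m n + (1 - alpha * delta_coef m) * UE m n)).

Definition high_mixture (m : nat) (alpha lamO lamE : R) (lam : nat -> R) (n : nat) : R :=
  lamO * ((1 - alpha) * UO m n + alpha * UO (m + 1) n)
  + lamE * ((1 - alpha) * UE m n + alpha * UO (m + 1) n)
  + sumR m (fun j => lam j *
      ((1 - alpha) * sigma_coef m * V j m n + (1 - (1 - alpha) * sigma_coef m) * UO (m + 1) n)).

Definition mixture_form (m : nat) (alpha lamO lamE : R) (lam kap : nat -> R)
    (X : nat -> R) : Prop :=
  (alpha <= (INR m + 1) / (2 * INR m + 1) /\
     forall n, X n = low_mixture m alpha lamO lamE lam kap n)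
  \/ ((INR m + 1) / (2 * INR m + 1) < alpha /\
     (forall n, X n = high_mixture m alpha lamO lamE lam n) /\
     forall j, (1 <= j <= m)%nat -> kap j = 0).

Section Mixtures.

Variables (m : nat) (alpha lamO lamE : R) (lam kap : nat -> R).

Section Slope.

Hypothesis hm : (1 <= m)%nat.
Hypothesis ha : 0 < alpha < 1.
Hypothesis hnn : 0 <= lamO /\ 0 <= lamE /\
  (forall j, (1 <= j <= m)%nat -> 0 <= lam j /\ 0 <= kap j).
(* The indifference relation of the lemma, which fixes the slope 2/v2. *)
Variable v2 : R.
Hypothesis hsum : lamO + lamE + sumR m lam + sumR m kap = 1.
Hypothesis heq : (INR m + 1 - alpha) / (INR m * (INR m + 1)) - 2 / v2 =
  lamE * ((1 - alpha) / (INR m * (INR m + 1)))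
  + sumR m (fun j => kap j * (1 / (INR m + 1)) * ((1 - alpha) / INR m - alpha / (INR m + 1))).

Let kap_total : sumR m (fun j => kap j * (1 / (INR m + 1)) *
                          ((1 - alpha) / INR m - alpha / (INR m + 1)))
  = sumR m kap * (1 / (INR m + 1) * ((1 - alpha) / INR m - alpha / (INR m + 1))).
Proof. rewrite <- sumR_scal. apply sumR_ext. intros. ring. Qed.

Let shared_slope :
  midcdf_slope m
    (fun n => lamO * ((1 - alpha) * UO m n + alpha * UO (m + 1) n)
            + lamE * ((1 - alpha) * UE m n + alpha * UO (m + 1) n))
    (lamO * ((1 - alpha) * / INR m + alpha * / INR (m + 1))
     + lamE * ((1 - alpha) * / INR (m + 1) + alpha * / INR (m + 1))).
Proof.
  assert (hUO1 := UO_slope m (m + 1) ltac:(lia) ltac:(lia)).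
  apply slope_lin; try apply slope_lin; try lra;
    [apply UO_slope; lia | exact hUO1 | apply UE_slope | exact hUO1].
Qed.

Lemma low_mixture_slope :
  alpha <= (INR m + 1) / (2 * INR m + 1) ->
  midcdf_slope m (low_mixture m alpha lamO lamE lam kap) (2 / v2).
Proof.
  intros hthr. destruct hnn as [hO [hE hj]].
  assert (hM : 1 <= INR m) by exact (le_INR 1 m hm).
  assert (hw : 0 <= alpha * delta_coef m <= 1).
  { apply weight_of_bound; unfold delta_coef;
      [apply Rdiv_lt_0_compat; lra | split; [lra|]].
    rewrite Rinv_div. exact hthr. }
  assert (hlam := slope_sum m m lam
    (fun _ => alpha * delta_coef m * (2 / INR (2 * m + 1))
              + (1 - alpha * delta_coef m) * / INR m)
    (fun j n => alpha * delta_coef m * V j m n + (1 - alpha * delta_coef m) * UO m n)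
    (fun j hjm => conj (V_mix_slope _ _ _ _ _ hjm hw (UO_slope m m hm (le_n m)))
                       (proj1 (hj j hjm)))).
  assert (hkap := slope_sum m m kap
    (fun _ => alpha * delta_coef m * (2 / INR (2 * m + 1))
              + (1 - alpha * delta_coef m) * / INR (m + 1))
    (fun j n => alpha * delta_coef m * V j m n + (1 - alpha * delta_coef m) * UE m n)
    (fun j hjm => conj (V_mix_slope _ _ _ _ _ hjm hw (UE_slope m)) (proj2 (hj j hjm)))).
  refine (slope_ext _ _ _ _ _
            (slope_add _ _ _ _ _ (slope_add _ _ _ _ _ shared_slope hlam) hkap)
            (fun n => eq_refl) _).
  rewrite !sumR_scal, INR_succ_m, INR_2m_succ.
  rewrite kap_total in heq. unfold delta_coef.
  replace (2 / v2) with ((INR m + 1 - alpha) / (INR m * (INR m + 1))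
    - (lamE * ((1 - alpha) / (INR m * (INR m + 1)))
       + sumR m kap * (1 / (INR m + 1) * ((1 - alpha) / INR m - alpha / (INR m + 1))))) by lra.
  replace lamO with (1 - lamE - sumR m lam - sumR m kap) by lra.
  field. lra.
Qed.

Lemma high_mixture_slope :
  (INR m + 1) / (2 * INR m + 1) < alpha -> (forall j, (1 <= j <= m)%nat -> kap j = 0) ->
  midcdf_slope m (high_mixture m alpha lamO lamE lam) (2 / v2).
Proof.
  intros hthr hkap0. destruct hnn as [hO [hE hj]].
  assert (hM : 1 <= INR m) by exact (le_INR 1 m hm).
  assert (hkap : sumR m kap = 0).
  { rewrite (sumR_ext m kap (fun _ => 0 * 0)) by (intros; rewrite hkap0 by auto; ring).
    rewrite sumR_scal. ring. }
  assert (hw : 0 <= (1 - alpha) * sigma_coef m <= 1).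
  { apply weight_of_bound; unfold sigma_coef;
      [apply Rdiv_lt_0_compat; lra | split; [lra|]].
    rewrite Rinv_div.
    replace (INR m / (2 * INR m + 1)) with (1 - (INR m + 1) / (2 * INR m + 1)) by (field; lra).
    lra. }
  assert (hlam := slope_sum m m lam
    (fun _ => (1 - alpha) * sigma_coef m * (2 / INR (2 * m + 1))
              + (1 - (1 - alpha) * sigma_coef m) * / INR (m + 1))
    (fun j n => (1 - alpha) * sigma_coef m * V j m n
                + (1 - (1 - alpha) * sigma_coef m) * UO (m + 1) n)
    (fun j hjm => conj (V_mix_slope _ _ _ _ _ hjm hw (UO_slope m (m + 1) ltac:(lia) ltac:(lia)))
                       (proj1 (hj j hjm)))).
  refine (slope_ext _ _ _ _ _ (slope_add _ _ _ _ _ shared_slope hlam) (fun n => eq_refl) _).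
  rewrite !sumR_scal, INR_succ_m, INR_2m_succ.
  rewrite kap_total, hkap in heq. unfold sigma_coef.
  replace (2 / v2) with ((INR m + 1 - alpha) / (INR m * (INR m + 1))
    - lamE * ((1 - alpha) / (INR m * (INR m + 1)))) by lra.
  replace lamO with (1 - lamE - sumR m lam) by lra.
  field. lra.
Qed.

Lemma mixture_slope (X : nat -> R) :
  mixture_form m alpha lamO lamE lam kap X -> midcdf_slope m X (2 / v2).
Proof.
  intros [[hthr hX]|[hthr [hX hkap0]]].
  - exact (slope_ext _ _ _ _ _ (low_mixture_slope hthr) (fun n => eq_sym (hX n)) eq_refl).
  - exact (slope_ext _ _ _ _ _ (high_mixture_slope hthr hkap0) (fun n => eq_sym (hX n)) eq_refl).
Qed.

End Slope.

Lemma mixture_off_blocks (X : nat -> R) (n : nat) :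
  mixture_form m alpha lamO lamE lam kap X ->
  UO m n = 0 -> UO (m + 1) n = 0 -> (forall j, (1 <= j <= m)%nat -> V j m n = 0) ->
  exists c, X n = c * UE m n /\ (lamE = 0 -> sumR m kap = 0 -> c = 0).
Proof.
  intros hform hO hO1 hV.
  assert (hnoV : forall (w : nat -> R) (c : R) (g : nat -> R),
             sumR m (fun j => w j * (c * V j m n + (1 - c) * g n)) = sumR m w * ((1 - c) * g n)).
  { intros w c g. rewrite <- sumR_scal. apply sumR_ext.
    intros j hjm. rewrite hV by exact hjm. ring. }
  destruct hform as [[_ hX]|[_ [hX _]]].
  - exists (lamE * (1 - alpha) + sumR m kap * (1 - alpha * delta_coef m)).
    split; [|intros -> ->; ring].
    rewrite hX. unfold low_mixture. rewrite !hnoV, hO, hO1. ring.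
  - exists (lamE * (1 - alpha)). split; [|intros -> _; ring].
    rewrite hX. unfold high_mixture. rewrite hnoV, hO, hO1. ring.
Qed.

Lemma mixture_support (X : nat -> R) :
  mixture_form m alpha lamO lamE lam kap X ->
  forall n, X n <> 0 -> (n <= 2 * m + 1)%nat /\ (n = 0%nat -> ~ (lamE = 0 /\ sumR m kap = 0)).
Proof.
  intros hform n hXn. split.
  - destruct (le_lt_dec n (2 * m + 1)) as [hn|hn]; [exact hn|exfalso].
    destruct (mixture_off_blocks X n hform) as [c [hc _]];
      try (apply UO_beyond; lia); try (intros; apply V_beyond; lia).
    rewrite UE_beyond in hc by lia. apply hXn. rewrite hc. ring.
  - intros -> [hE hK].
    destruct (mixture_off_blocks X 0 hform) as [c [hc hc0]];
      try exact (UO_even _ 0); try (intros; apply V_at_zero; lia).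
    apply hXn. rewrite hc, (hc0 hE hK). ring.
Qed.

End Mixtures.

Lemma slope_gain (v : R) (m : nat) (f : nat -> R) :
  0 < v -> midcdf_slope m f (2 / v) ->
  (forall n, bid_gain v f n <= v * midcdf f 0) /\
  (forall k, (k <= m)%nat -> bid_gain v f (2 * k) = v * midcdf f 0).
Proof.
  intros hv [hle heq]. unfold bid_gain. split.
  - intros n. specialize (hle n).
    apply (Rmult_le_compat_l v) in hle; [|lra].
    replace (v * (2 / v * INR n / 2)) with (INR n) in hle by (field; lra). lra.
  - intros k hk. specialize (heq k hk). rewrite mult_INR.
    replace (v * midcdf f (2 * k))
      with (v * midcdf f 0 + v * (midcdf f (2 * k) - midcdf f 0)) by ring.
    rewrite heq. simpl (INR 2). field. lra.
Qed.

Lemma midcdf_dirac0_zero : midcdf (dirac 0) 0 = 1 / 2.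
Proof. unfold midcdf, dirac. simpl. field. Qed.

Lemma midcdf_dirac0_succ (n : nat) : midcdf (dirac 0) (S n) = 1.
Proof.
  unfold midcdf. replace (dirac 0 (S n)) with 0 by reflexivity.
  induction n as [|n IH]; simpl in *; unfold dirac in *; simpl in *; lra.
Qed.

Lemma UE_pair (m n : nat) : (n <= 2 * m)%nat -> UE m n + UE m (S n) = / INR (m + 1).
Proof.
  intros hn. destruct (Nat.Even_or_Odd n) as [[k ->]|[k ->]].
  - replace (S (2 * k)) with (2 * k + 1)%nat by lia.
    rewrite UE_even, UE_odd. case_nat_tests; lia || ring.
  - replace (S (2 * k + 1)) with (2 * S k)%nat by lia.
    rewrite UE_even, UE_odd. case_nat_tests; lia || ring.
Qed.

Lemma midcdf_UE_eq (m n : nat) :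
  (n <= 2 * m + 1)%nat -> 2 * INR (m + 1) * midcdf (UE m) n = INR n + 1.
Proof.
  assert (hpos : 0 < INR (m + 1)) by (apply lt_0_INR; lia).
  induction n as [|n IH]; intros hn.
  - unfold midcdf. change (UE m 0) with (UE m (2 * 0)). rewrite UE_even. simpl. field. lra.
  - rewrite midcdf_succ, S_INR, Rmult_plus_distr_l, IH, UE_pair by lia. field. lra.
Qed.

Lemma midcdf_UE_le (m n : nat) : 2 * INR (m + 1) * midcdf (UE m) n <= INR n + 1.
Proof.
  assert (hpos : 0 < INR (m + 1)) by (apply lt_0_INR; lia).
  destruct (UE_slope m) as [hle _]. specialize (hle n).
  pose proof (midcdf_UE_eq m 0 ltac:(lia)) as h0. simpl INR in h0.
  apply (Rmult_le_compat_l (2 * INR (m + 1))) in hle; [|lra].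
  replace (2 * INR (m + 1) * (/ INR (m + 1) * INR n / 2)) with (INR n) in hle by (field; lra).
  lra.
Qed.

Section PlayerTwo.

Variables (v1 b : R) (m : nat) (Y : nat -> R).
Hypothesis hm : (1 <= m)%nat.
Hypothesis hb : 0 < b <= INR m.
Hypothesis hval : INR m * (INR m + 1) / b = v1 / 2.
Hypothesis hY : forall n, Y n = (1 - b / INR m) * dirac 0 n + b / INR m * UE m n.

Lemma Y_gain :
  (forall n, bid_gain v1 Y n <= v1 * (1 - b / INR m) + 1) /\
  (forall n, (n <= 2 * m + 1)%nat -> (n = 0%nat -> b = INR m) ->
             bid_gain v1 Y n = v1 * (1 - b / INR m) + 1).
Proof.
  assert (hM : 1 <= INR m) by exact (le_INR 1 m hm).
  assert (hscale : v1 * (b / INR m) = INR (m + 1) * 2).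
  { rewrite INR_succ_m. replace v1 with (2 * (INR m * (INR m + 1) / b)) by lra. field. lra. }
  assert (hrest : 0 <= v1 * (1 - b / INR m)).
  { replace v1 with (2 * (INR m * (INR m + 1) / b)) by lra.
    replace (2 * (INR m * (INR m + 1) / b) * (1 - b / INR m))
      with (2 * (INR m + 1) * ((INR m - b) / b)) by (field; lra).
    apply Rmult_le_pos; [lra|]. apply Rmult_le_pos; [lra|]. apply Rlt_le, Rinv_0_lt_compat; lra. }
  assert (hgain : forall n, bid_gain v1 Y n =
     v1 * (1 - b / INR m) * midcdf (dirac 0) n + 2 * INR (m + 1) * midcdf (UE m) n - INR n).
  { intros n. unfold bid_gain. rewrite (midcdf_ext _ _ n hY), midcdf_lin.
    replace (2 * INR (m + 1)) with (v1 * (b / INR m)) by lra. ring. }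
  split.
  - intros n. rewrite hgain. pose proof (midcdf_UE_le m n) as hUE.
    destruct n as [|n]; [rewrite midcdf_dirac0_zero|rewrite midcdf_dirac0_succ];
      simpl (INR 0) in *; lra.
  - intros n hn hzero. rewrite hgain, midcdf_UE_eq by exact hn.
    destruct n as [|n]; [|rewrite midcdf_dirac0_succ; ring].
    rewrite (hzero eq_refl), Rdiv_diag by lra. simpl. ring.
Qed.

Lemma Y_support : forall n, Y n <> 0 -> exists k, (k <= m)%nat /\ n = (2 * k)%nat.
Proof.
  intros n hYn. rewrite hY in hYn.
  destruct (Nat.Even_or_Odd n) as [[k ->]|[k ->]].
  - exists k. split; [|reflexivity].
    destruct (le_lt_dec k m) as [hk|hk]; [exact hk|exfalso].
    rewrite UE_even in hYn. unfold dirac in hYn.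
    revert hYn. case_nat_tests; intros hYn; try lia. apply hYn. ring.
  - exfalso. rewrite UE_odd in hYn. unfold dirac in hYn.
    revert hYn. case_nat_tests; intros hYn; try lia. apply hYn. ring.
Qed.

End PlayerTwo.

Theorem lemma6
  (v1 v2 : R) (m : nat) (alpha b : R)
  (X Y : nat -> R)
  (lamO lamE : R) (lam kap : nat -> R)
  (hv : v1 >= v2) (hv2 : v2 > 0) (hm : (1 <= m)%nat)
  (ha : 0 < alpha < 1) (hb : 0 < b <= INR m)
  (hval : INR m * (INR m + 1) / b = v1 / 2)
  (hlotto : lotto_Nash (INR m + alpha) b X Y)
  (hY : forall n, Y n = (1 - b / INR m) * dirac 0 n + b / INR m * UE m n)
  (hXa : alpha <= (INR m + 1) / (2 * INR m + 1) ->
     forall n, X n =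
       lamO * ((1 - alpha) * UO m n + alpha * UO (m + 1) n)
     + lamE * ((1 - alpha) * UE m n + alpha * UO (m + 1) n)
     + sumR m (fun j => lam j *
         (alpha * ((2 * INR m + 1) / (INR m + 1)) * V j m n
          + (1 - alpha * ((2 * INR m + 1) / (INR m + 1))) * UO m n))
     + sumR m (fun j => kap j *
         (alpha * ((2 * INR m + 1) / (INR m + 1)) * V j m n
          + (1 - alpha * ((2 * INR m + 1) / (INR m + 1))) * UE m n)))
  (hXb : (INR m + 1) / (2 * INR m + 1) < alpha ->
     (forall n, X n =
       lamO * ((1 - alpha) * UO m n + alpha * UO (m + 1) n)
     + lamE * ((1 - alpha) * UE m n + alpha * UO (m + 1) n)
     + sumR m (fun j => lam j *
         ((1 - alpha) * ((2 * INR m + 1) / INR m) * V j m n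
          + (1 - (1 - alpha) * ((2 * INR m + 1) / INR m)) * UO (m + 1) n)))
     /\ (forall j, (1 <= j <= m)%nat -> kap j = 0))
  (hnn : 0 <= lamO /\ 0 <= lamE /\
     (forall j, (1 <= j <= m)%nat -> 0 <= lam j /\ 0 <= kap j))
  (hsum : lamO + lamE + sumR m lam + sumR m kap = 1)
  (hgt : INR m > b -> lamE = 0 /\ sumR m kap = 0)
  (heq : (INR m + 1 - alpha) / (INR m * (INR m + 1)) - 2 / v2 =
     lamE * ((1 - alpha) / (INR m * (INR m + 1)))
     + sumR m (fun j => kap j * (1 / (INR m + 1)) *
         ((1 - alpha) / INR m - alpha / (INR m + 1)))) :
  allpay_Nash v1 v2 X Y.
Proof.
  destruct hlotto as [hXs [_ [hYs _]]].
  assert (hform : mixture_form m alpha lamO lamE lam kap X).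
  { destruct (Rle_or_lt alpha ((INR m + 1) / (2 * INR m + 1))) as [hlow|hhigh].
    - left. exact (conj hlow (hXa hlow)).
    - right. exact (conj hhigh (hXb hhigh)). }
  destruct (Y_gain v1 b m Y hm hb hval hY) as [gain1_le gain1_eq].
  destruct (slope_gain v2 m X hv2 (mixture_slope m alpha lamO lamE lam kap hm ha hnn
              v2 hsum heq X hform)) as [gain2_le gain2_eq].
  split; [exact hXs|]. split; [exact hYs|]. split.
  - apply (best_response v1 X Y _ hXs hYs gain1_le).
    intros n hXn. destruct (mixture_support m alpha lamO lamE lam kap X hform n hXn)
      as [hn hn0].
    apply gain1_eq; [exact hn|]. intros hz.
    destruct (Req_dec b (INR m)) as [e|ne]; [exact e|].
    exfalso. apply (hn0 hz), hgt. lra.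
  - intros q' hq'. unfold P2. rewrite !(PrEq_comm X).
    apply (best_response v2 Y X _ hYs hXs gain2_le); [|exact hq'].
    intros n hYn. destruct (Y_support b m Y hm hY n hYn) as [k [hk ->]]. exact (gain2_eq k hk).
Qed.
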